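(* Suppose the bornology of a large scale group $G$ has a countable basis. If $G$ is unbounded and locally bounded, then $G$ has infinitely many ends.
   Context: A large scale group is a group $G$ with a bornology $\mathcal B$ (a cover of $G$ closed under subsets and finite unions) closed under inverses and products; uniformly bounded covers are those refining $\{gB\}_{g\in G}$ for some $B\in\mathcal B$; bounded sets are members of $\mathcal B$; a basis of $\mathcal B$ is a subfamily such that each member of $\mathcal B$ lies in a member of it. $G$ is locally bounded if for every bounded $B\subseteq G$ the subgroup $\langle B\rangle$ generated by $B$ is bounded. For $A\subseteq G$ and a cover $\mathcal U$, $st(A,\mathcal U)$ is the union of the members of $\mathcal U$ meeting $A$. $A$ is coarsely clopen if $st(A,\mathcal U)\cap st(G\setminus A,\mathcal U)$ is bounded for every uniformly bounded $\mathcal U$. An end of $G$ is a family of unbounded coarsely clopen subsets of $G$ maximal with respect to the property that all finite intersections of its members are unbounded. *)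

From Stdlib Require Import List.
Import ListNotations.
Set Implicit Arguments.

Record LargeScaleGroup := {
  carrier :> Type;
  mul : carrier -> carrier -> carrier;
  inv : carrier -> carrier;
  one : carrier;
  mulA : forall x y z, mul x (mul y z) = mul (mul x y) z;
  mul1g : forall x, mul one x = x;
  mulg1 : forall x, mul x one = x;
  mulVg : forall x, mul (inv x) x = one;
  mulgV : forall x, mul x (inv x) = one;
  bounded : (carrier -> Prop) -> Prop;
  born_cover : forall x, exists B, bounded B /\ B x;
  born_sub : forall A C, bounded A -> (forall x, C x -> A x) -> bounded C;
  born_union : forall A C, bounded A -> bounded C ->
      bounded (fun x => A x \/ C x);
  born_empty : bounded (fun _ => False);
  born_inv : forall A, bounded A -> bounded (fun x => exists a, A a /\ x = inv a);
  born_mul : forall A C, bounded A -> bounded C ->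
      bounded (fun x => exists a c, A a /\ C c /\ x = mul a c)
}.

Section Defs.
Variable G : LargeScaleGroup.

Definition subset (A B : G -> Prop) : Prop := forall x, A x -> B x.

(** A basis of the bornology; countable basis = indexed by nat. *)
Definition has_countable_basis : Prop :=
  exists b : nat -> (G -> Prop),
    (forall n, bounded G (b n)) /\
    (forall A, bounded G A -> exists n, subset A (b n)).

Definition is_subgroup (H : G -> Prop) : Prop :=
  H (one G) /\ (forall x y, H x -> H y -> H (mul G x y)) /\
  (forall x, H x -> H (inv G x)).

Definition gen_subgroup (B : G -> Prop) : G -> Prop :=
  fun x => forall H, is_subgroup H -> subset B H -> H x.

Definition locally_bounded : Prop :=
  forall B, bounded G B -> bounded G (gen_subgroup B).

Definition unbounded_group : Prop := ~ bounded G (fun _ => True).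

Definition is_cover (U : (G -> Prop) -> Prop) : Prop :=
  forall x, exists V, U V /\ V x.

Definition ltrans (g : G) (B : G -> Prop) : G -> Prop :=
  fun x => exists b, B b /\ x = mul G g b.

Definition uniformly_bounded (U : (G -> Prop) -> Prop) : Prop :=
  is_cover U /\
  exists B, bounded G B /\ forall V, U V -> exists g, subset V (ltrans g B).

Definition star (A : G -> Prop) (U : (G -> Prop) -> Prop) : G -> Prop :=
  fun x => exists V, U V /\ V x /\ exists a, V a /\ A a.

Definition coarsely_clopen (A : G -> Prop) : Prop :=
  forall U, uniformly_bounded U ->
    bounded G (fun x => star A U x /\ star (fun y => ~ A y) U x).

Definition list_inter (l : list (G -> Prop)) : G -> Prop :=
  fun x => Forall (fun A => A x) l.

Definition good_family (E : (G -> Prop) -> Prop) : Prop :=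
  (forall A, E A -> ~ bounded G A /\ coarsely_clopen A) /\
  (forall l, l <> [] -> Forall E l -> ~ bounded G (list_inter l)).

Definition is_end (E : (G -> Prop) -> Prop) : Prop :=
  good_family E /\
  forall E', good_family E' -> (forall A, E A -> E' A) -> forall A, E' A -> E A.

End Defs.

From Stdlib Require Import Arith List Classical ClassicalEpsilon Lia Cantor.
From mathcomp Require classical_sets.
Import ListNotations.

(** Using local boundedness
    we build an increasing sequence of bounded subgroups [M 0 ⊆ M 1 ⊆ ...]
    such that every bounded set lies in some [M n] and every "annulus"
    [M (S j) \ M j] is nonempty (this uses that G itself is unbounded).  We
    call such a sequence an exhaustion of G.

    Given an exhaustion, right multiplication by an element of [M m] keeps
    every annulus of index [j >= m] invariant; since a member of a uniformly
    bounded cover is a translate [g B] with [B ⊆ M m], it stays inside a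
    single annulus once it leaves [M m].  Hence any union of annuli is
    coarsely clopen, and it is unbounded when its index set is cofinal.

    Splitting ℕ into infinitely many disjoint cofinal sets (the fibres of the
    Cantor pairing) gives infinitely many pairwise disjoint unbounded coarsely
    clopen sets.  By Zorn's lemma each of them lies in an end, and disjoint
    sets cannot belong to the same end, so these ends are pairwise distinct. *)

Arguments gen_subgroup {G}. Arguments is_subgroup {G}. Arguments subset {G}.
Arguments coarsely_clopen {G}. Arguments list_inter {G}.
Arguments good_family {G}. Arguments ltrans {G}.

Section Ends.
Context {G : LargeScaleGroup}.

Lemma good_family_sub (E E' : (G -> Prop) -> Prop) :
  good_family E' -> (forall A, E A -> E' A) -> good_family E.
Proof.
  intros [hunb hinter] hsub. split.
  - intros A hA. apply hunb, hsub, hA.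
  - intros l hl hl_E. apply hinter; [exact hl|].
    eapply Forall_impl; [|exact hl_E]. exact hsub.
Qed.

Lemma chain_finite_list (C : ((G -> Prop) -> Prop) -> Prop)
    (F : (G -> Prop) -> Prop) :
  classical_sets.total_on C classical_sets.subset ->
  forall l, Forall (fun A => (exists2 X, C X & X A) \/ F A) l ->
  Forall F l \/ exists X, C X /\ Forall (fun A => X A \/ F A) l.
Proof.
  intros htot l. induction l as [|a l IH]; intros hl; [left; constructor|].
  inversion hl as [|? ? ha hl']; subst.
  destruct (IH hl') as [hF|[X [hX hXF]]]; destruct ha as [[Y hY hYa]|ha].
  - right. exists Y. split; [exact hY|]. constructor; [left; exact hYa|].
    eapply Forall_impl; [|exact hF]. intros; right; assumption.
  - left. constructor; assumption.
  - right. destruct (htot X Y hX hY) as [hXY|hYX].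
    + exists Y. split; [exact hY|]. constructor; [left; exact hYa|].
      eapply Forall_impl; [|exact hXF].
      intros A [hA|hA]; [left; apply hXY, hA|right; exact hA].
    + exists X. split; [exact hX|].
      constructor; [left; apply hYX, hYa|exact hXF].
  - right. exists X. split; [exact hX|]. constructor; [right; exact ha|exact hXF].
Qed.

Lemma good_family_in_end {F : (G -> Prop) -> Prop} : good_family F ->
  exists E, is_end G E /\ forall A, F A -> E A.
Proof.
  intros hF.
  pose (P := fun E : (G -> Prop) -> Prop => good_family (fun A => E A \/ F A)).
  destruct (@classical_sets.Zorn_bigcup (G -> Prop) P) as [E0 [hE0 hmax]].
  - intros C hC htot. split.
    + intros A [[X hX hXA]|hA]; [apply (hC X hX); left; exact hXA|apply hF, hA].
    + intros l hl hl_C.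
      destruct (chain_finite_list C F htot l hl_C) as [hl_F|[X [hX hl_X]]].
      * apply hF; assumption.
      * apply (hC X hX); assumption.
  - exists (fun A => E0 A \/ F A). split; [|intros A hA; right; exact hA].
    split; [exact hE0|].
    intros E' hE' hsub A hA. apply NNPP; intro hnA.
    apply (hmax E').
    + split; [intros B hB; apply hsub; left; exact hB|].
      intro hE'E0. apply hnA. left. apply hE'E0, hA.
    + apply good_family_sub with E'; [exact hE'|].
      intros B [hB|hB]; [exact hB|apply hsub; right; exact hB].
Qed.

Lemma singleton_good {A : G -> Prop} :
  ~ bounded G A -> coarsely_clopen A -> good_family (fun X => X = A).
Proof.
  intros hunb hcc. split; [intros X ->; split; assumption|].
  intros l _ hl hinter. apply hunb.
  apply born_sub with (list_inter l); [exact hinter|].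
  intros x hx. unfold list_inter. rewrite Forall_forall in *.
  intros X hX. rewrite (hl X hX). exact hx.
Qed.

Lemma good_family_no_disjoint {E : (G -> Prop) -> Prop} {A A' : G -> Prop} :
  good_family E -> E A -> E A' -> (forall x, A x -> A' x -> False) -> False.
Proof.
  intros [_ hinter] hA hA' hdisj.
  apply (hinter [A; A']); [discriminate|repeat constructor; assumption|].
  apply born_sub with (fun _ => False); [apply born_empty|].
  intros x hx. inversion hx as [|? ? hAx hx']; subst.
  inversion hx' as [|? ? hA'x _]; subst. exact (hdisj x hAx hA'x).
Qed.

Lemma ends_of_disjoint_sequence (A : nat -> G -> Prop) :
  (forall i, ~ bounded G (A i)) -> (forall i, coarsely_clopen (A i)) ->
  (forall i k x, A i x -> A k x -> i = k) ->
  exists f : nat -> ((G -> Prop) -> Prop),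
    (forall n, is_end G (f n)) /\ (forall m n, f m = f n -> m = n).
Proof.
  intros hunb hcc hdisj.
  assert (hend : forall i, exists E, is_end G E /\ E (A i)).
  { intro i. destruct (good_family_in_end (singleton_good (hunb i) (hcc i)))
      as [E [hE hAE]].
    exists E. split; [exact hE|apply hAE; reflexivity]. }
  destruct (choice (fun i E => is_end G E /\ E (A i)) hend) as [f hf].
  exists f. split; [intro n; apply hf|].
  intros m n hmn. apply NNPP; intro hne.
  destruct (hf m) as [[hgood _] hAm]. destruct (hf n) as [_ hAn].
  rewrite <- hmn in hAn.
  apply (good_family_no_disjoint hgood hAm hAn).
  intros x hxm hxn. exact (hne (hdisj m n x hxm hxn)).
Qed.

End Ends.

Section Subgroups.
Context {G : LargeScaleGroup}.

Lemma gen_subgroup_is_subgroup (B : G -> Prop) : is_subgroup (gen_subgroup B).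
Proof.
  split; [|split].
  - intros H [h1 _] _. exact h1.
  - intros x y hx hy H hH hB. pose proof hH as [_ [hmul _]].
    apply hmul; [apply hx|apply hy]; assumption.
  - intros x hx H hH hB. pose proof hH as [_ [_ hinv]].
    apply hinv, hx; assumption.
Qed.

Lemma gen_subgroup_incl (B : G -> Prop) : subset B (gen_subgroup B).
Proof. intros x hx H _ hB. apply hB, hx. Qed.

Lemma singleton_bounded (x : G) : bounded G (fun y => y = x).
Proof.
  destruct (born_cover G x) as [B [hB hxB]].
  apply born_sub with B; [exact hB|]. intros y ->. exact hxB.
Qed.

Lemma point_outside {A : G -> Prop} :
  unbounded_group G -> bounded G A -> exists x, ~ A x.
Proof.
  intros hunb hA. apply NNPP; intro hall. apply hunb.
  apply born_sub with A; [exact hA|].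
  intros x _. apply NNPP; intro hx. apply hall. exists x. exact hx.
Qed.

End Subgroups.

Record exhaustion {G : LargeScaleGroup} (M : nat -> G -> Prop) : Prop := {
  exh_subgroup : forall n, is_subgroup (M n);
  exh_bounded : forall n, bounded G (M n);
  exh_step : forall n, subset (M n) (M (S n));
  exh_absorb : forall A, bounded G A -> exists n, subset A (M n);
  exh_strict : forall n, exists x, M (S n) x /\ ~ M n x
}.
Arguments exh_subgroup {G M}. Arguments exh_bounded {G M}.
Arguments exh_step {G M}. Arguments exh_absorb {G M} _ {A}.
Arguments exh_strict {G M}.

Section Construction.
Context {G : LargeScaleGroup}.
Variable b : nat -> G -> Prop.
Hypothesis b_bounded : forall n, bounded G (b n).
Hypothesis b_basis : forall A, bounded G A -> exists n, subset A (b n).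
Hypothesis G_unbounded : unbounded_group G.
Hypothesis G_locally_bounded : locally_bounded G.

(** Some point outside [A] (meaningful when [A] is bounded). *)
Definition outside (A : G -> Prop) : G :=
  epsilon (inhabits (one G)) (fun x => ~ A x).

(** [chain (S n)] is generated by [chain n], the next basis set and a point
    outside [chain n]; the latter makes the step strict. *)
Fixpoint chain (n : nat) : G -> Prop :=
  match n with
  | 0 => gen_subgroup (b 0)
  | S n => gen_subgroup (fun x => chain n x \/ b (S n) x \/ x = outside (chain n))
  end.

(** Each step generates a subgroup from a bounded set, so local boundedness
    keeps it bounded. *)
Lemma chain_bounded n : bounded G (chain n).
Proof.
  induction n as [|n IH]; apply G_locally_bounded; [apply b_bounded|].
  repeat apply born_union; [exact IH|apply b_bounded|apply singleton_bounded].
Qed.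

Lemma chain_exhaustion : exhaustion chain.
Proof.
  split.
  - intros [|n]; apply gen_subgroup_is_subgroup.
  - exact chain_bounded.
  - intros n x hx. apply gen_subgroup_incl. left. exact hx.
  - intros A hA. destruct (b_basis A hA) as [n hn]. exists n.
    intros x hx. destruct n as [|n]; apply gen_subgroup_incl;
      [|right; left]; apply hn, hx.
  - intro n. exists (outside (chain n)). split.
    + apply gen_subgroup_incl. right; right. reflexivity.
    + apply (epsilon_spec (inhabits (one G)) (fun x => ~ chain n x)).
      exact (point_outside G_unbounded (chain_bounded n)).
Qed.

End Construction.

Lemma exhaustion_exists {G : LargeScaleGroup} :
  has_countable_basis G -> unbounded_group G -> locally_bounded G ->
  exists M : nat -> G -> Prop, exhaustion M.
Proof.
  intros [b [hb hbasis]] hunb hlb. exists (chain b).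
  exact (chain_exhaustion b hb hbasis hunb hlb).
Qed.

Section Annuli.
Context {G : LargeScaleGroup} {M : nat -> G -> Prop} (exh : exhaustion M).

Lemma exh_mono j k : j <= k -> subset (M j) (M k).
Proof.
  induction 1 as [|k _ IH]; intros x hx; [exact hx|].
  apply (exh_step exh), IH, hx.
Qed.

Definition annulus (j : nat) (x : G) : Prop := M (S j) x /\ ~ M j x.

Lemma annulus_unique {j k x} : annulus j x -> annulus k x -> j = k.
Proof.
  intros [hj1 hj] [hk1 hk]. destruct (Nat.lt_trichotomy j k) as [h|[h|h]].
  - exfalso. apply hk, (exh_mono (S j) k); [lia|exact hj1].
  - exact h.
  - exfalso. apply hj, (exh_mono (S k) j); [lia|exact hk1].
Qed.

Lemma annulus_of_outside {m x} : ~ M m x -> exists j, m <= j /\ annulus j x.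
Proof.
  intros hm. destruct (exh_absorb exh (singleton_bounded x)) as [k hk].
  specialize (hk x eq_refl). induction k as [|k IH].
  - exfalso. apply hm, (exh_mono 0 m); [lia|exact hk].
  - destruct (classic (M k x)) as [hkx|hkx]; [exact (IH hkx)|].
    exists k. split; [|split; assumption].
    destruct (le_lt_dec m k) as [hle|hlt]; [exact hle|].
    exfalso. apply hm, (exh_mono (S k) m); [lia|exact hk].
Qed.

Lemma annulus_mulr j m z h :
  m <= j -> M m h -> annulus j z -> annulus j (mul G z h).
Proof.
  intros hmj hh [hz1 hz].
  assert (hhj : forall k, j <= k -> M k h).
  { intros k hk. apply (exh_mono m k); [lia|exact hh]. }
  destruct (exh_subgroup exh (S j)) as [_ [hmul1 _]].
  destruct (exh_subgroup exh j) as [_ [hmul hinv]]. split.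
  - apply hmul1; [exact hz1|apply hhj; lia].
  - intro hzh. apply hz.
    replace z with (mul G (mul G z h) (inv G h))
      by (rewrite <- mulA, mulgV, mulg1; reflexivity).
    apply hmul; [exact hzh|apply hinv, hhj; lia].
Qed.

(** A translate [g B] with [B ⊆ M m] meeting an annulus of index [j >= m]
    is contained in it, because [g b' = (g b) (b^-1 b')]. *)
Lemma translate_in_annulus {j m g} {B : G -> Prop} {x y} :
  m <= j -> subset B (M m) -> ltrans g B x -> ltrans g B y ->
  annulus j x -> annulus j y.
Proof.
  intros hmj hBm [bx [hbx ->]] [y' [hy' ->]] hx.
  replace (mul G g y') with (mul G (mul G g bx) (mul G (inv G bx) y')).
  - destruct (exh_subgroup exh m) as [_ [hmul hinv]].
    apply annulus_mulr with m; [exact hmj| |exact hx].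
    apply hmul; [apply hinv|]; apply hBm; assumption.
  - rewrite <- mulA. f_equal. rewrite mulA, mulgV, mul1g. reflexivity.
Qed.

Definition annuli_union (J : nat -> Prop) (x : G) : Prop :=
  exists j, J j /\ annulus j x.

(** Every union of annuli is coarsely clopen: the points of
    [st(A,U) ∩ st(G \ A,U)] all lie in [M m], where [B ⊆ M m] bounds [U]. *)
Lemma annuli_union_coarsely_clopen (J : nat -> Prop) :
  coarsely_clopen (annuli_union J).
Proof.
  intros U [_ [B [hB hUB]]].
  destruct (exh_absorb exh hB) as [m hm].
  apply born_sub with (M m); [apply (exh_bounded exh)|].
  intros x [[V [hV [hxV [a [haV haJ]]]]] [V' [hV' [hxV' [a' [ha'V' ha'J]]]]]].
  apply NNPP; intro hxm.
  destruct (annulus_of_outside hxm) as [j [hmj hxj]].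
  assert (hsame : forall W y, U W -> W x -> W y -> annulus j y).
  { intros W y hW hWx hWy. destruct (hUB W hW) as [g hg].
    exact (translate_in_annulus hmj hm (hg x hWx) (hg y hWy) hxj). }
  destruct haJ as [k [hJk hak]].
  apply ha'J. exists j. split; [|exact (hsame V' a' hV' hxV' ha'V')].
  rewrite (annulus_unique (hsame V a hV hxV haV) hak). exact hJk.
Qed.

Lemma annuli_union_unbounded {J : nat -> Prop} :
  (forall n, exists j, n <= j /\ J j) -> ~ bounded G (annuli_union J).
Proof.
  intros hcof hbd. destruct (exh_absorb exh hbd) as [n hn].
  destruct (hcof n) as [j [hnj hJj]].
  destruct (exh_strict exh j) as [x hx].
  apply (proj2 hx), (exh_mono n j); [exact hnj|].
  apply hn. exists j. split; [exact hJj|exact hx].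
Qed.

End Annuli.
Arguments annulus {G} M j x. Arguments annuli_union {G} M J x.

Lemma cantor_fibre_cofinal (i n : nat) :
  exists j, n <= j /\ fst (of_nat j) = i.
Proof.
  exists (to_nat (i, n)). rewrite cancel_of_to. split; [|reflexivity].
  pose proof (to_nat_non_decreasing i n). lia.
Qed.

Theorem proposition9p2 (G : LargeScaleGroup) :
  has_countable_basis G -> unbounded_group G -> locally_bounded G ->
  exists f : nat -> ((G -> Prop) -> Prop),
    (forall n, @is_end G (f n)) /\ (forall m n, f m = f n -> m = n).
Proof.
  intros hbasis hunb hlb.
  destruct (exhaustion_exists hbasis hunb hlb) as [M exh].
  pose (A := fun i => annuli_union M (fun j => fst (of_nat j) = i)).
  apply (ends_of_disjoint_sequence A).
  - intro i. exact (annuli_union_unbounded exh (cantor_fibre_cofinal i)).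
  - intro i. exact (annuli_union_coarsely_clopen exh _).
  - intros i k x [j [hj hjx]] [j' [hj' hj'x]].
    rewrite <- hj, <- hj', (annulus_unique exh hjx hj'x). reflexivity.
Qed.
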